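(* For every $n\ge 3$, the power graph $P(G(n))$ of the gyrogroup $G(n)$ (defined in the context) is not Hamiltonian.
   Context: Let $n\ge 3$ be an integer and $m=2^{n-1}$. Let $P(n)=\{0,1,\dots,m-1\}$, $H(n)=\{m,m+1,\dots,2^n-1\}$ and $G(n)=P(n)\cup H(n)$. For $i,j\in G(n)$ let $t,s,k\in P(n)$ be the residues modulo $m$ (taken in $\{0,\dots,m-1\}$) of $i+j$, $i+(\frac m2-1)j$ and $(\frac m2+1)i+(\frac m2-1)j$, respectively, and define $i\oplus j=t$ if $i,j\in P(n)$; $i\oplus j=t+m$ if $i\in P(n),j\in H(n)$; $i\oplus j=s+m$ if $i\in H(n),j\in P(n)$; $i\oplus j=k$ if $i,j\in H(n)$. Then $(G(n),\oplus)$ is a gyrogroup with identity $e=0$. Powers are defined by $a^1=a$, $a^{k+1}=a^k\oplus a$. The power graph $P(G(n))$ is the simple undirected graph with vertex set $G(n)$ in which distinct vertices $u,v$ are adjacent if and only if $u^k=v$ or $v^k=u$ for some positive integer $k$. A graph is Hamiltonian if it has a cycle passing through every vertex. *)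

From mathcomp Require Import all_boot.
Set Implicit Arguments. Unset Strict Implicit. Unset Printing Implicit Defensive.

(* The gyrogroup G(n) on {0,...,2^n-1}, with m = 2^(n-1),
   P(n) = {0..m-1}, H(n) = {m..2^n-1}. Operations on nat. *)
Definition gm (n : nat) : nat := 2 ^ n.-1.

Definition goplus (n i j : nat) : nat :=
  let m := gm n in
  let t := (i + j) %% m in
  let s := (i + (m %/ 2 - 1) * j) %% m in
  let k := ((m %/ 2 + 1) * i + (m %/ 2 - 1) * j) %% m in
  if i < m then (if j < m then t else t + m)
  else (if j < m then s + m else k).

(* a^1 = a, a^(k+1) = a^k (+) a ; gpow n a k = a^(k+1) *)
Fixpoint gpow (n a k : nat) : nat :=
  match k with
  | 0 => a
  | k'.+1 => goplus n (gpow n a k') a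
  end.

Definition power_adj (n : nat) (u v : 'I_(2 ^ n)) : Prop :=
  u <> v /\ exists k, 0 < k /\ (gpow n u k.-1 = v \/ gpow n v k.-1 = u).

Definition hamiltonian (T : finType) (adj : T -> T -> Prop) : Prop :=
  exists (x0 : T) (s : seq T), [/\ uniq s, (forall x, x \in s), 3 <= size s &
    forall i, i < size s ->
      adj (nth x0 s i) (nth x0 s (i.+1 %% size s))].

From mathcomp Require Import all_boot.
From mathcomp Require Import zify.

Set Implicit Arguments.
Unset Strict Implicit.
Unset Printing Implicit Defensive.

(* The vertex m = 2^(n-1), the first element of H(n), is a leaf of the power
   graph: every h in H(n) satisfies h (+) h = 0 and 0 (+) h = h, so its powers
   alternate between h and 0, while P(n) is closed under (+), so no element of
   P(n) has a power in H(n).  Its only neighbour is therefore 0, whereas a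
   vertex on a Hamiltonian cycle has two distinct neighbours. *)

Lemma hamiltonian_pred_succ (T : finType) (adj : T -> T -> Prop) (x : T) :
  hamiltonian adj -> exists y z, [/\ y != z, adj x y & adj z x].
Proof.
case=> x0 [s [uniq_s all_s size_s adj_s]].
set d := size s in size_s adj_s *.
have d_gt0 : 0 < d by lia.
set i := index x s.
have i_lt : i < d by rewrite index_mem.
have nth_i : nth x0 s i = x by rewrite nth_index.
set j := (i + d.-1) %% d.
have j_lt : j < d by rewrite ltn_pmod.
have succ_j : j.+1 %% d = i.
  rewrite -addn1 modnDml -addnA addn1 prednK; last by lia.
  by rewrite modnDr modn_small.
exists (nth x0 s (i.+1 %% d)), (nth x0 s j); split.
- (* i + 1 = i - 1 (mod d) would make d divide 2 *)
  rewrite nth_uniq ?ltn_pmod //; apply/eqP => succ_i.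
  move: succ_j; rewrite -succ_i -addn1 modnDml addn1 -addn2.
  rewrite -{2}(modn_small i_lt) -[i in _ = i %% _]addn0 => /eqP.
  by rewrite eqn_modDl mod0n modn_small //; lia.
- by rewrite -nth_i; apply: adj_s.
- by rewrite -nth_i -succ_j; apply: adj_s.
Qed.

Lemma gm_gt0 n : 0 < gm n.
Proof. by rewrite expn_gt0. Qed.

Lemma exp2n_double_gm n : 0 < n -> 2 ^ n = 2 * gm n.
Proof. by case: n => // n _; rewrite /gm expnS. Qed.

Lemma goplus_lt_gm n i j : i < gm n -> j < gm n -> goplus n i j < gm n.
Proof. by move=> i_lt j_lt; rewrite /goplus i_lt j_lt ltn_pmod ?gm_gt0. Qed.

Lemma gpow_lt_gm n a k : a < gm n -> gpow n a k < gm n.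
Proof. by move=> a_lt; elim: k => //= k IH; apply: goplus_lt_gm. Qed.

Lemma goplus_diag_H n h : gm n <= h -> goplus n h h = 0.
Proof.
move=> h_ge; rewrite /goplus ltnNge h_ge /=.
(* for n <= 1 the modulus m is 1; otherwise (m/2 + 1) + (m/2 - 1) = m *)
case: n h_ge => [|[|n]] h_ge; rewrite ?modn1 //.
rewrite /gm /= expnS mulKn // -mulnDl.
have -> : 2 ^ n + 1 + (2 ^ n - 1) = 2 * 2 ^ n by have := expn_gt0 2 n; lia.
exact: modnMr.
Qed.

Lemma goplus0l_H n h : gm n <= h < 2 * gm n -> goplus n 0 h = h.
Proof.
case/andP=> h_ge h_lt; rewrite /goplus gm_gt0 ltnNge h_ge /= add0n.
by rewrite -{1}(subnK h_ge) modnDr modn_small ?subnK // ltn_subLR //; lia.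
Qed.

Lemma gpow_H n h k :
  gm n <= h < 2 * gm n -> gpow n h k = if odd k then 0 else h.
Proof.
move=> h_H; elim: k => //= k ->.
case: (odd k) => /=; first exact: goplus0l_H.
by case/andP: h_H => h_ge _; apply: goplus_diag_H.
Qed.

Lemma power_adj_sym n (u v : 'I_(2 ^ n)) : power_adj u v -> power_adj v u.
Proof.
case=> u_ne_v [k [k_gt0 uv]]; split; first by move=> /esym.
by exists k; split => //; case: uv; [right | left].
Qed.

Lemma power_adj_H_eq0 n (h v : 'I_(2 ^ n)) :
  0 < n -> gm n <= h -> power_adj h v -> val v = 0.
Proof.
move=> n_gt0 h_ge [h_ne_v [k [_ powk]]].
have vertex_lt (x : 'I_(2 ^ n)) : x < 2 * gm n by rewrite -exp2n_double_gm.
have h_H : gm n <= h < 2 * gm n by rewrite h_ge vertex_lt.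
case: powk => [hk_v | vk_h].
  by move: hk_v; rewrite gpow_H //; case: odd => // /val_inj/h_ne_v.
case: (ltnP v (gm n)) => [v_lt | v_ge].
  by move: (gpow_lt_gm k.-1 v_lt); rewrite vk_h ltnNge h_ge.
move: vk_h; rewrite gpow_H ?v_ge ?vertex_lt //.
case: odd => [h0 | /val_inj/esym/h_ne_v //].
by move: h_ge; rewrite -h0 leqNgt gm_gt0.
Qed.

Theorem mainTheorem2 (n : nat) : 3 <= n -> ~ hamiltonian (@power_adj n).
Proof.
move=> n_ge3; have n_gt0 : 0 < n by lia.
have gm_lt : gm n < 2 ^ n by rewrite exp2n_double_gm // ltn_Pmull ?gm_gt0.
pose h := Ordinal gm_lt; have h_H : gm n <= h by [].
case/(hamiltonian_pred_succ h)=> y [z [/eqP y_ne_z hy zh]].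
have y0 := power_adj_H_eq0 n_gt0 h_H hy.
have z0 := power_adj_H_eq0 n_gt0 h_H (power_adj_sym zh).
by apply: y_ne_z; apply: val_inj; rewrite y0 z0.
Qed.
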